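(* Let $X$ be a real Hilbert space, $r>0$, and let $Z\subset X$ be an $r$-prox-regular set. Assume there exist $R\ge 3$ and $\rho\in\left(0,\frac{2r}{1+R^2}\right)$ such that for every $x\in Z$ there exists $\bar x\in Z$ with $|x-\bar x|<R\rho$ and $B_{3\rho}(\bar x)\subset Z$. Then for every $x\in\partial Z$ there exists a unit vector $\xi\in X$ such that $$\langle \xi, x-z\rangle+\frac{1}{2r}|x-z|^2\ge 0\quad\text{for all } z\in Z.$$
   Context: $X$ is a real Hilbert space with scalar product $\langle\cdot,\cdot\rangle$ and norm $|\cdot|$; $\mathrm{dist}(x,Z)=\inf\{|x-z|:z\in Z\}$; $B_\delta(x)=\{y\in X:|y-x|\le\delta\}$ is the closed ball; $\partial Z$ is the boundary of $Z$. A closed connected set $Z\subset X$ is called $r$-prox-regular ($r>0$) if for every $y\in X$ with $\mathrm{dist}(y,Z)=d\in(0,r)$ there exists $x\in Z$ such that $\mathrm{dist}\left(x+\frac{r}{d}(y-x),Z\right)=\frac{r}{d}|y-x|=r$. *)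

From HB Require Import structures.
From mathcomp Require Import all_boot all_order all_algebra.
From mathcomp Require Import all_classical all_reals all_analysis.
Set Implicit Arguments. Unset Strict Implicit. Unset Printing Implicit Defensive.
Import Order.TTheory GRing.Theory Num.Theory.
Import numFieldNormedType.Exports.
Local Open Scope classical_set_scope.
Local Open Scope ring_scope.

Definition hilbert_ip (R : realType) (V : completeNormedModType R)
  (ip : V -> V -> R) : Prop :=
  [/\ forall x y : V, ip x y = ip y x,
      forall (a : R) (x y z : V), ip (a *: x + y) z = a * ip x z + ip y z
    & forall x : V, ip x x = `|x| ^+ 2].

Definition dist (R : realType) (V : normedModType R) (x : V) (Z : set V) : R :=
  inf [set `|x - z| | z in Z].

Definition cball (R : realType) (V : normedModType R) (x : V) (delta : R)
  : set V := [set y | `|y - x| <= delta].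

Definition bdry (R : realType) (V : normedModType R) (Z : set V) : set V :=
  closure Z `\` interior Z.

Definition prox_regular (R : realType) (V : normedModType R) (r : R)
  (Z : set V) : Prop :=
  [/\ closed Z, connected Z &
   forall y : V, 0 < dist y Z -> dist y Z < r ->
     exists2 x, Z x &
       dist (x + (r / dist y Z) *: (y - x)) Z = (r / dist y Z) * `|y - x| /\
       (r / dist y Z) * `|y - x| = r].

(* Near a boundary point x of Z there are points p of Z carrying unit
   proximal normals xi (project onto Z a point just outside Z).  Since the
   ball B_{3 rho}(xb) lies in Z, testing the normal inequality at
   xb + 3 rho xi shows that all these normals satisfy
   <xi, x - xb> >= c for a fixed c > 0.  Hence, for every eps > 0, the closed
   convex set of zeta with |zeta| <= 1, <zeta, x - xb> >= c and
   <zeta, z - x> <= |z - x|^2 / r + eps on Z is nonempty.  These sets decrease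
   with eps, and by the parallelogram law their near-minimal-norm elements form
   a Cauchy sequence, so in the Hilbert space X they have a common point
   zeta <> 0.  Finally, a unit xi with <xi, z - x> <= K |z - x|^2 on Z makes x
   the projection onto Z of x + t xi for small t, and prox-regularity then
   yields the constant 1 / (2 r). *)

From HB Require Import structures.
From mathcomp Require Import all_boot all_order all_algebra.
From mathcomp Require Import all_classical all_reals all_analysis.
From mathcomp Require Import ring lra.
Import Order.TTheory GRing.Theory Num.Theory.
Import numFieldNormedType.Exports.
Local Open Scope classical_set_scope.
Local Open Scope ring_scope.

Lemma natSinv_le {R : realType} (n k : nat) :
  (n <= k)%N -> k.+1%:R^-1 <= n.+1%:R^-1 :> R.
Proof. by move=> nk; rewrite lef_pV2 ?posrE ?ltr0Sn // ler_nat ltnS. Qed.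

Section Distance.
Context {R : realType} {V : normedModType R}.

Lemma dist_le {Z : set V} {y z : V} : Z z -> dist y Z <= `|y - z|.
Proof.
by move=> Zz; apply: ge_inf; [exists 0 => _ [w _ <-] | exists z].
Qed.

Lemma le_dist {Z : set V} {y : V} {t : R} :
  Z !=set0 -> (forall z, Z z -> t <= `|y - z|) -> t <= dist y Z.
Proof.
move=> [z0 Zz0] tle; apply: lb_le_inf; first by exists `|y - z0|, z0.
by move=> _ [z Zz <-]; exact: tle.
Qed.

Lemma dist_gt0 {Z : set V} {y : V} : closed Z -> Z !=set0 -> ~ Z y -> 0 < dist y Z.
Proof.
move=> /closed_openC; rewrite openE => /[swap] Zn0 /[apply].
move=> /nbhs_ballP[e e0 ballZ]; apply: (lt_le_trans e0); apply: le_dist => // z Zz.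
by rewrite leNgt; apply/negP => yze; apply: ballZ Zz; rewrite -ball_normE.
Qed.

Lemma not_interior_ball {Z : set V} {x : V} {d : R} :
  ~ interior Z x -> 0 < d -> exists2 y, `|x - y| < d & ~ Z y.
Proof.
move=> xNint d0; apply: contrapT => noy; apply: xNint.
apply/nbhs_ballP; exists d => // y; rewrite -ball_normE /= => xy.
by apply: contrapT => Zy; apply: noy; exists y.
Qed.

End Distance.

Definition midconvex {R : realType} {V : normedModType R} (S : set V) :=
  forall a b, S a -> S b -> S (2^-1 *: (a + b)).

Definition inf_sqr_norm {R : realType} {V : normedModType R} (S : set V) : R :=
  inf [set `|a| ^+ 2 | a in S].

Definition prox_normal {R : realType} {V : normedModType R}
    (ip : V -> V -> R) (r : R) (Z : set V) (p xi : V) :=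
  forall z, Z z -> 0 <= ip xi (p - z) + (2 * r)^-1 * `|p - z| ^+ 2.

Definition approx_normals {R : realType} {V : normedModType R}
    (ip : V -> V -> R) (r : R) (Z : set V) (x v : V) (c eps : R) : set V :=
  [set a | `|a| <= 1] `&` [set a | c <= ip a v] `&`
  \bigcap_(z in Z) [set a | ip a (z - x) <= r^-1 * `|z - x| ^+ 2 + eps].

Section InnerProduct.
Context {R : realType} {V : completeNormedModType R} {ip : V -> V -> R}.
Hypothesis ipH : hilbert_ip ip.

Lemma ipC x y : ip x y = ip y x.
Proof. by case: ipH. Qed.

Lemma ipDl x y z : ip (x + y) z = ip x z + ip y z.
Proof. by case: ipH => _ ipZDl _; have := ipZDl 1 x y z; rewrite scale1r mul1r. Qed.

Lemma ip0l z : ip 0 z = 0.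
Proof. by have := ipDl 0 0 z; rewrite addr0; lra. Qed.

Lemma ipZl a x z : ip (a *: x) z = a * ip x z.
Proof. by case: ipH => _ ipZDl _; rewrite -[a *: x]addr0 ipZDl ip0l addr0. Qed.

Lemma ipNl x z : ip (- x) z = - ip x z.
Proof. by rewrite -scaleN1r ipZl mulN1r. Qed.

Lemma ipBl x y z : ip (x - y) z = ip x z - ip y z.
Proof. by rewrite ipDl ipNl. Qed.

Lemma ipDr x y z : ip z (x + y) = ip z x + ip z y.
Proof. by rewrite !(ipC z) ipDl. Qed.

Lemma ipZr a x z : ip z (a *: x) = a * ip z x.
Proof. by rewrite !(ipC z) ipZl. Qed.

Lemma ipNr x z : ip z (- x) = - ip z x.
Proof. by rewrite !(ipC z) ipNl. Qed.

Lemma ipBr x y z : ip z (x - y) = ip z x - ip z y.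
Proof. by rewrite !(ipC z) ipBl. Qed.

Lemma ipxx x : ip x x = `|x| ^+ 2.
Proof. by case: ipH. Qed.

Lemma sqr_normD x y : `|x + y| ^+ 2 = `|x| ^+ 2 + 2 * ip x y + `|y| ^+ 2.
Proof. by rewrite -!ipxx ipDl !ipDr (ipC y x); ring. Qed.

Lemma sqr_normB x y : `|x - y| ^+ 2 = `|x| ^+ 2 - 2 * ip x y + `|y| ^+ 2.
Proof. by rewrite -!ipxx ipBl !ipBr (ipC y x); ring. Qed.

Lemma parallelogram_law (x y : V) :
  `|x + y| ^+ 2 + `|x - y| ^+ 2 = 2 * (`|x| ^+ 2 + `|y| ^+ 2).
Proof. by rewrite sqr_normD sqr_normB; ring. Qed.

Lemma normr_ip_le (x y : V) : `|ip x y| <= `|x| * `|y|.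
Proof.
suff ip_le u w : ip u w <= `|u| * `|w|.
  rewrite ler_norml ip_le andbT lerNl -ipNl -(normrN x); exact: ip_le.
have polar : 4 * ip u w = `|u + w| ^+ 2 - `|u - w| ^+ 2.
  by rewrite sqr_normD sqr_normB; ring.
have normD_sqr : `|u + w| ^+ 2 <= (`|u| + `|w|) ^+ 2.
  by rewrite ler_sqr ?nnegrE ?addr_ge0 ?ler_normD.
have normB_sqr : (`|u| - `|w|) ^+ 2 <= `|u - w| ^+ 2.
  have := ler_dist_dist u w; rewrite ler_norml => /andP[? ?].
  have := normr_ge0 (u - w); nra.
lra.
Qed.

Lemma ip_continuousl (w : V) : continuous (ip ^~ w).
Proof.
move=> a; apply/cvgrPdist_le => e e0.
have w1 : 0 < `|w| + 1 by rewrite ltr_pwDr.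
near=> b; rewrite /= -ipBl (le_trans (normr_ip_le _ _)) //.
rewrite (le_trans (ler_wpM2l (normr_ge0 _) (ler_wpDr ler01 (lexx `|w|)))) //.
rewrite -ler_pdivlMr //; near: b; apply: cvgr_dist_le; first exact: cvg_id.
by rewrite divr_gt0.
Unshelve. all: by end_near. Qed.

Lemma inf_sqr_norm_le {S : set V} {a : V} : S a -> inf_sqr_norm S <= `|a| ^+ 2.
Proof.
by move=> Sa; apply: ge_inf; [exists 0 => _ [b _ <-]; exact: sqr_ge0 | exists a].
Qed.

Lemma le_inf_sqr_norm (S T : set V) :
  S !=set0 -> S `<=` T -> inf_sqr_norm T <= inf_sqr_norm S.
Proof.
move=> [a Sa] ST; apply: lb_le_inf; first by exists (`|a| ^+ 2), a.
by move=> _ [b Sb <-]; apply: inf_sqr_norm_le; exact: ST.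
Qed.

Lemma inf_sqr_norm_adherent {S : set V} {e : R} : S !=set0 -> 0 < e ->
  exists2 a, S a & `|a| ^+ 2 < inf_sqr_norm S + e.
Proof.
move=> [a Sa] e0; have Sinf : has_inf [set `|c| ^+ 2 | c in S].
  by split; [exists (`|a| ^+ 2), a | exists 0 => _ [b _ <-]; exact: sqr_ge0].
by have [_ [b Sb <-] ?] := inf_adherent e0 Sinf; exists b.
Qed.

Lemma midconvex_sqr_normB {S : set V} {a b : V} : midconvex S -> S a -> S b ->
  `|a - b| ^+ 2 <= 2 * (`|a| ^+ 2 + `|b| ^+ 2) - 4 * inf_sqr_norm S.
Proof.
move=> Sconv Sa Sb; have := inf_sqr_norm_le (Sconv _ _ Sa Sb).
rewrite normrZ exprMn ger0_norm ?invr_ge0 ?ler0n // -parallelogram_law.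
have -> : (2^-1 : R) ^+ 2 = 4^-1 by rewrite expr2 -invfM -natrM.
move: (`|a + b| ^+ 2) => s; lra.
Qed.

Section NestedMidconvex.
Context {A : nat -> set V} {B : R}.
Hypotheses (A_neq0 : forall n, A n !=set0)
  (A_nested : forall n k, (n <= k)%N -> A k `<=` A n)
  (A_midconvex : forall n, midconvex (A n))
  (A_bounded : forall n a, A n a -> `|a| <= B).
Arguments A_nested {n k}.
Arguments A_bounded {n a}.

Let m n := inf_sqr_norm (A n).

Lemma nested_min_norm_cvg {zs : nat -> V} :
  (forall n, A n (zs n) /\ `|zs n| ^+ 2 < m n + n.+1%:R^-1) -> cvg (zs @ \oo).
Proof.
move=> zs_min.
have m_le k : m k <= B ^+ 2.
  have [a Aa] := A_neq0 k; apply: le_trans (inf_sqr_norm_le Aa) _.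
  by rewrite expr2 ler_pM // (A_bounded Aa).
have m_mono n k : (n <= k)%N -> m n <= m k.
  by move=> nk; apply: le_inf_sqr_norm; [exact: A_neq0 | exact: A_nested].
pose M := sup (range m).
have m_sup : has_sup (range m).
  by split; [exists (m 0), 0 | exists (B ^+ 2) => _ [n _ <-]; exact: m_le].
have le_M n : m n <= M by apply: ub_le_sup; [case: m_sup | exists n].
have zs_close n k : (n <= k)%N ->
    `|zs n - zs k| ^+ 2 <= 2 * (M - m n) + 4 * n.+1%:R^-1.
  move=> nk; have [An_n zs_n] := zs_min n; have [Ak_k zs_k] := zs_min k.
  have := midconvex_sqr_normB (A_midconvex n) An_n (A_nested nk _ Ak_k).
  rewrite -/(m n); have := @natSinv_le R _ _ nk; have := le_M k.
  set qn := (n.+1%:R^-1 : R) in zs_n *; set qk := (k.+1%:R^-1 : R) in zs_k *; lra.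
apply/cauchy_cvgP/cauchy_exP => e e0.
have e80 : 0 < e ^+ 2 / 8 by rewrite divr_gt0 // exprn_gt0.
have [_ [N1 _ <-] N1_sup] := sup_adherent e80 m_sup.
have [N2 _ N2_inv] := near_infty_natSinv_lt (PosNum e80).
set N := maxn N1 N2; exists (zs N), N => // n /= le_n.
rewrite -ball_normE /= -(ltr_pXn2r (_ : 0 < 2)%N) ?nnegrE ?normr_ge0 ?(ltW e0) //.
apply: le_lt_trans (zs_close _ _ le_n) _.
have := m_mono _ _ (leq_maxl N1 N2); have /= := N2_inv _ (leq_maxr N1 N2).
have := @natSinv_le R _ _ (leq_maxr N1 N2); have := exprn_gt0 2 e0.
rewrite -/N -/M in N1_sup *.
set qN := (N.+1%:R^-1 : R); set q2 := (N2.+1%:R^-1 : R); lra.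
Qed.

Hypothesis A_closed : forall n, closed (A n).

Lemma bigcap_nested_midconvex_neq0 : \bigcap_n A n !=set0.
Proof.
have min_norm n : exists a, A n a /\ `|a| ^+ 2 < m n + n.+1%:R^-1.
  have q0 : 0 < n.+1%:R^-1 :> R by rewrite invr_gt0.
  have [a Aa ?] := inf_sqr_norm_adherent (A_neq0 n) q0.
  by exists a.
have [zs zs_min] := choice min_norm.
exists (lim (zs @ \oo)) => n _.
apply: (closed_cvg _ (A_closed n) _ _ (nested_min_norm_cvg zs_min)).
by exists n => // k /= nk; apply: A_nested nk _ (proj1 (zs_min k)).
Qed.

End NestedMidconvex.

Lemma sqr_norm_shift_ge {x z xi : V} {t K : R} :
  `|xi| = 1 -> 0 <= t -> 4 * t * K <= 1 ->
  ip xi (z - x) <= K * `|z - x| ^+ 2 ->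
  t ^+ 2 + `|x - z| ^+ 2 / 2 <= `|x + t *: xi - z| ^+ 2.
Proof.
move=> xi1 t0 tK ipK; have -> : x + t *: xi - z = t *: xi + (x - z).
  by rewrite addrAC addrC.
rewrite (sqr_normD (t *: xi)) normrZ xi1 mulr1 ger0_norm //.
rewrite ipZl; rewrite -opprB ipNr normrN in ipK.
have := sqr_ge0 `|x - z|; move: ipK; set s := `|x - z| ^+ 2; nra.
Qed.

Section ProxRegular.
Context {r : R} {Z : set V}.
Hypotheses (r_gt0 : 0 < r) (Z_prox : prox_regular r Z).

Local Notation prox_normal := (prox_normal ip r Z).
Local Notation approx_normals := (approx_normals ip r Z).

Lemma ball_disjoint_prox_normal (p xi : V) : `|xi| = 1 ->
  (forall z, Z z -> r <= `|p + r *: xi - z|) -> prox_normal p xi.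
Proof.
move=> xi1 far z Zz; have := far z Zz; rewrite (addrC p) -addrA => farz.
have : r ^+ 2 <= `|r *: xi + (p - z)| ^+ 2.
  by rewrite ler_sqr ?nnegrE ?normr_ge0 ?(ltW r_gt0).
rewrite (sqr_normD (r *: xi)) normrZ xi1 mulr1 (ger0_norm (ltW r_gt0)) ipZl => far2.
rewrite -(pmulr_rge0 _ (mulr_gt0 (ltr0Sn R 1) r_gt0)) mulrDr mulrA mulfV; last first.
  by rewrite mulf_neq0 ?gt_eqF.
lra.
Qed.

Lemma prox_regular_projection {y : V} : 0 < dist y Z -> dist y Z < r ->
  exists2 p, Z p &
    `|y - p| = dist y Z /\ prox_normal p ((dist y Z)^-1 *: (y - p)).
Proof.
case: Z_prox => _ _ proj d0 dr; have [p Zp [far rp]] := proj y d0 dr.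
set d := dist y Z in d0 far rp *.
have d_neq0 : d != 0 by rewrite gt_eqF.
have yp : `|y - p| = d.
  by apply: (mulfI (mulf_neq0 (lt0r_neq0 r_gt0) (invr_neq0 d_neq0))); rewrite rp mulfVK.
exists p => //; split => //; apply: ball_disjoint_prox_normal => [|z Zz].
  by rewrite normrZ yp ger0_norm ?invr_ge0 ?ltW // mulVf.
by rewrite scalerA -[r in r <= _]rp -far; exact: dist_le.
Qed.

Lemma prox_normal_local {x xi : V} {K : R} : Z x -> `|xi| = 1 -> 0 < K ->
  (forall z, Z z -> ip xi (z - x) <= K * `|z - x| ^+ 2) -> prox_normal x xi.
Proof.
move=> Zx xi1 K0 ipK.
(* any [t < r] with [4 t K <= 1] makes [x] the projection of [x + t xi] *)
pose t := r / (1 + 4 * K * r); pose y := x + t *: xi.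
have den_gt0 : 0 < 1 + 4 * K * r by rewrite addr_gt0 ?ltr01 ?mulr_gt0.
have t0 : 0 < t by rewrite divr_gt0.
have tden : t + 4 * t * K * r = r.
  by rewrite /t; field; rewrite lt0r_neq0.
have tKr : 0 < t * K * r by rewrite mulr_gt0 // mulr_gt0.
have tr : t < r by lra.
have tK : 4 * t * K <= 1 by nra.
have far z : Z z -> t ^+ 2 + `|x - z| ^+ 2 / 2 <= `|y - z| ^+ 2.
  by move=> Zz; exact: sqr_norm_shift_ge xi1 (ltW t0) tK (ipK z Zz).
have yx_def : y - x = t *: xi by rewrite /y addrAC subrr add0r.
have yx : `|y - x| = t by rewrite yx_def normrZ xi1 mulr1 gtr0_norm.
have dy : dist y Z = t.
  apply/eqP; rewrite eq_le -{1}yx dist_le //=; apply: le_dist => [|z Zz].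
    by exists x.
  rewrite -(ler_pXn2r (_ : 0 < 2)%N) ?nnegrE ?normr_ge0 ?(ltW t0) //.
  by apply: le_trans (far z Zz); rewrite lerDl divr_ge0 ?sqr_ge0.
have d0 : 0 < dist y Z by rewrite dy.
have dr : dist y Z < r by rewrite dy.
have [p Zp [yp normal_p]] := prox_regular_projection d0 dr.
suff px : p = x.
  by move: normal_p; rewrite px dy yx_def scalerA mulVf ?gt_eqF ?scale1r.
have := far p Zp; rewrite yp dy => farp.
have : `|x - p| ^+ 2 <= 0 by move: farp; set s := `|x - p| ^+ 2; lra.
by rewrite le_eqVlt ltNge sqr_ge0 orbF sqrf_eq0 normr_eq0 subr_eq0 => /eqP ->.
Qed.

Lemma prox_normal_near {x : V} {e : R} : Z x -> ~ interior Z x -> 0 < e ->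
  exists p xi, [/\ Z p, `|xi| = 1, `|p - x| < e & prox_normal p xi].
Proof.
move=> Zx xNint e0; case: (Z_prox) => Zclosed _ _.
have d0 : 0 < Num.min (e / 2) r by rewrite lt_min r_gt0 andbT divr_gt0.
have [y] := not_interior_ball xNint d0; rewrite lt_min => /andP[xy_e xy_r] yNZ.
have yx_ge : dist y Z <= `|x - y| by rewrite distrC dist_le.
have d_gt0 : 0 < dist y Z by apply: dist_gt0 => //; exists x.
have [p Zp [yp normal_p]] := prox_regular_projection d_gt0 (le_lt_trans yx_ge xy_r).
exists p, ((dist y Z)^-1 *: (y - p)); split => //.
  by rewrite normrZ yp ger0_norm ?invr_ge0 ?ltW // mulVf ?gt_eqF.
have := ler_distD y p x; rewrite (distrC p y) yp (distrC y x); lra.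
Qed.

Lemma prox_normal_shift {p xi : V} (x : V) {z : V} :
  `|xi| = 1 -> prox_normal p xi -> Z z ->
  ip xi (z - x) <= r^-1 * `|z - x| ^+ 2 + (r^-1 * `|p - x| ^+ 2 + `|p - x|).
Proof.
move=> xi1 normal_p Zz; have := normal_p z Zz.
have zx : (p - x) - (p - z) = z - x by rewrite opprB addrC addrA subrK.
rewrite -{1}zx (ipBr (p - x)).
have := normr_ip_le xi (p - x); rewrite xi1 mul1r ler_norml => /andP[_ ip_le].
have pz_sqr : `|p - z| ^+ 2 <= 2 * `|p - x| ^+ 2 + 2 * `|z - x| ^+ 2.
  have pz := ler_distD x p z; have := ler_pM (normr_ge0 _) (normr_ge0 _) pz pz.
  have := sqr_ge0 (`|p - x| - `|x - z|); rewrite (distrC x z) !expr2; nra.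
have r2_ge0 : 0 <= (2 * r)^-1 by rewrite invr_ge0 mulr_ge0 // ltW.
have := ler_wpM2l r2_ge0 pz_sqr; rewrite invfM; set ri := r^-1; move: ip_le.
set s := `|p - x|; set w := `|z - x|; lra.
Qed.

Lemma ball_prox_normal_ge {xb p xi : V} {rho : R} : 0 <= rho ->
  cball xb (3 * rho) `<=` Z -> `|xi| = 1 -> prox_normal p xi ->
  6 * r * rho - 9 * rho ^+ 2 - `|p - xb| ^+ 2 <= (2 * r - 6 * rho) * ip xi (p - xb).
Proof.
move=> rho0 ballZ xi1 normal_p.
have rho3 : 0 <= 3 * rho by rewrite mulr_ge0.
have Zz : Z (xb + (3 * rho) *: xi).
  by apply: ballZ; rewrite /cball /= addrAC subrr add0r normrZ xi1 mulr1 ger0_norm.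
have := normal_p _ Zz.
have -> : p - (xb + (3 * rho) *: xi) = (p - xb) - (3 * rho) *: xi.
  by rewrite opprD addrA.
rewrite (sqr_normB (p - xb)) ipBr ipZr ipZr ipxx normrZ xi1 (ger0_norm rho3).
rewrite (ipC (p - xb)) -(pmulr_rge0 _ (mulr_gt0 (ltr0Sn R 1) r_gt0)).
rewrite mulrDr [2 * r * (_^-1 * _)]mulrA mulfV ?mulf_neq0 ?lt0r_neq0 //; lra.
Qed.

Lemma approx_normals_closed x v c eps : closed (approx_normals x v c eps).
Proof.
have closed_preim (f : V -> R) (I : set R) :
    continuous f -> closed I -> closed [set a | I (f a)].
  by move=> f_cont Icl; apply: (@preimage_closed _ _ f I _ Icl) => a _.
apply: closedI; first apply: closedI.
- exact: closed_preim norm_continuous (@closed_le R 1).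
- exact: closed_preim (ip_continuousl v) (@closed_ge R c).
- apply: closed_bigI => z _.
  exact: closed_preim (ip_continuousl _) (@closed_le R _).
Qed.

Lemma approx_normals_midconvex x v c eps : midconvex (approx_normals x v c eps).
Proof.
move=> a b [[/= a1 a2] a3] [[/= b1 b2] b3]; split; first split => /=.
- rewrite normrZ ger0_norm ?invr_ge0 ?ler0n //; have := ler_normD a b; lra.
- by rewrite ipZl ipDl; lra.
- move=> z Zz /=; rewrite ipZl ipDl.
  by have := a3 z Zz; have := b3 z Zz; move=> /= ? ?; lra.
Qed.

Lemma approx_normals_le x v c eps1 eps2 : eps1 <= eps2 ->
  approx_normals x v c eps1 `<=` approx_normals x v c eps2.
Proof.
move=> eps12 a [a12 a3]; split => // z Zz.
by apply: le_trans (a3 z Zz) _; rewrite lerD2l.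
Qed.

Lemma approx_normals_neq0 {x xb : V} {Rc rho : R} :
  Z x -> ~ interior Z x -> 3 <= Rc -> 0 < rho -> rho * (1 + Rc ^+ 2) < 2 * r ->
  `|x - xb| < Rc * rho -> cball xb (3 * rho) `<=` Z ->
  exists2 c, 0 < c & forall eps, 0 < eps -> approx_normals x (x - xb) c eps !=set0.
Proof.
move=> Zx xNint Rc3 rho0 rho_lt xxb ballZ.
pose g := 6 * r * rho - rho ^+ 2 * (Rc ^+ 2 + 9); pose c := g / (4 * r).
have Rc9 : 9 <= Rc ^+ 2 by nra.
have g0 : 0 < g by rewrite /g; nra.
have rho6 : 6 * rho < 2 * r by nra.
have c0 : 0 < c by rewrite divr_gt0 // mulr_gt0.
have gc : g = 4 * r * c by rewrite /c mulrC divfK // mulf_neq0 // lt0r_neq0.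
exists c => // eps eps0; set ri := r^-1.
have ri0 : 0 < ri by rewrite invr_gt0.
pose d := Num.min (Rc * rho - `|x - xb|) (Num.min c (Num.min 1 (eps / (ri + 1)))).
have d0 : 0 < d by rewrite !lt_min subr_gt0 xxb c0 ltr01 divr_gt0 // addr_gt0.
have [p [xi [Zp xi1 px normal_p]]] := prox_normal_near Zx xNint d0.
move: px; rewrite !lt_min => /and4P[pxb pxc px1 pxeps].
have s0 := normr_ge0 (p - x); set s := `|p - x| in s0 pxb pxc px1 pxeps.
exists xi; split; first split => /=.
- by rewrite xi1.
- have pxb' : `|p - xb| < Rc * rho by have := ler_distD x p xb; rewrite -/s; lra.
  have pxb2 : `|p - xb| ^+ 2 < (Rc * rho) ^+ 2.
    have Rcrho : 0 <= Rc * rho := ltW (le_lt_trans (normr_ge0 _) pxb').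
    by rewrite ltr_pXn2r ?nnegrE.
  have ball_ge := ball_prox_normal_ge (ltW rho0) ballZ xi1 normal_p.
  have := normr_ip_le xi (x - p); rewrite xi1 mul1r distrC -/s ler_norml.
  move=> /andP[ip_xp _]; have -> : x - xb = (x - p) + (p - xb) by rewrite addrA subrK.
  rewrite (ipDr (x - p)); rewrite exprMn in pxb2.
  set a := ip xi (p - xb) in ball_ge *.
  rewrite /g in gc; have a0 : 0 < a by nra.
  have : 2 * c < a by nra.
  lra.
- move=> z Zz; apply: le_trans (prox_normal_shift x xi1 normal_p Zz) _.
  rewrite lerD2l -/ri -/s; move: pxeps; rewrite ltr_pdivlMr ?addr_gt0 //.
  have : ri * s ^+ 2 <= ri * s.
    by rewrite expr2 mulrA ler_piMr ?mulr_ge0 ?(ltW ri0) ?(ltW px1).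
  lra.
Qed.

Lemma approx_normals_prox_normal {x v zeta : V} {c : R} : Z x -> 0 < c ->
  (forall n, approx_normals x v c n.+1%:R^-1 zeta) ->
  exists xi, `|xi| = 1 /\ prox_normal x xi.
Proof.
move=> Zx c0 zeta_approx; have [[_ /= c_le] _] := zeta_approx 0%N.
have zeta0 : 0 < `|zeta|.
  by rewrite normr_gt0; apply: contraTneq c_le => ->; rewrite ip0l -ltNge.
have zeta_normal z : Z z -> ip zeta (z - x) <= r^-1 * `|z - x| ^+ 2.
  move=> Zz; apply/ler_addgt0Pr => e e0.
  have [N _ N_lt] := near_infty_natSinv_lt (PosNum e0).
  have [_ /(_ z Zz) /= zeta_N] := zeta_approx N.
  by apply: le_trans zeta_N _; rewrite lerD2l ltW // N_lt /=.
exists (`|zeta|^-1 *: zeta); split.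
  by rewrite normrZ ger0_norm ?invr_ge0 ?ltW // mulVf ?gt_eqF.
apply: (prox_normal_local (K := `|zeta|^-1 * r^-1) Zx).
- by rewrite normrZ ger0_norm ?invr_ge0 ?ltW // mulVf ?gt_eqF.
- by rewrite mulr_gt0 ?invr_gt0.
- move=> z Zz; rewrite ipZl -mulrA ler_pM2l ?invr_gt0 //; exact: zeta_normal.
Qed.

End ProxRegular.
End InnerProduct.

Theorem lemma1p5 (R : realType) (V : completeNormedModType R)
  (ip : V -> V -> R) (r : R) (Z : set V) (Rc rho : R) :
  hilbert_ip ip -> 0 < r -> prox_regular r Z ->
  3 <= Rc -> 0 < rho -> rho < 2 * r / (1 + Rc ^+ 2) ->
  (forall x, Z x -> exists2 xb, Z xb &
      `|x - xb| < Rc * rho /\ cball xb (3 * rho) `<=` Z) ->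
  forall x, bdry Z x ->
    exists xi : V, `|xi| = 1 /\
      (forall z, Z z -> 0 <= ip xi (x - z) + (2 * r)^-1 * `|x - z| ^+ 2).
Proof.
move=> ipH r0 Zprox Rc3 rho0 rho_lt balls x [clZx xNint].
have Zx : Z x by case: Zprox => Zclosed _ _; exact: Zclosed.
have [xb _ [xxb ballZ]] := balls x Zx.
have rho_lt' : rho * (1 + Rc ^+ 2) < 2 * r.
  by rewrite -ltr_pdivlMr // ltr_wpDr // sqr_ge0.
have [c c0 approx_neq0] :=
  approx_normals_neq0 ipH r0 Zprox Zx xNint Rc3 rho0 rho_lt' xxb ballZ.
pose A n := approx_normals ip r Z x (x - xb) c n.+1%:R^-1.
have [zeta zeta_A] : \bigcap_n A n !=set0.
  apply: (bigcap_nested_midconvex_neq0 ipH (A := A) (B := 1)) => [n|n k nk|n|n a []|n].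
  - by apply: approx_neq0; rewrite invr_gt0.
  - exact/approx_normals_le/natSinv_le.
  - exact: approx_normals_midconvex.
  - by case.
  - exact: approx_normals_closed.
exact: (approx_normals_prox_normal ipH r0 Zprox Zx c0 (fun n => zeta_A n I)).
Qed.
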